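(* Let $\mathcal{F}$ be a linear $k$-uniform family with $k\geq 2$ and let $\mathcal{M}$ be a maximum matching of $\mathcal{F}$. If $B=\{x_1,x_2,\ldots,x_k\}\in\mathcal{M}$ is such that $d_1(x_i,\mathcal{M})\geq k$ for some $1\leq i\leq k$, then $d_1(x_j,\mathcal{M})=0$ for all $1\leq j\leq k$ with $j\neq i$.
   Context: A family is a finite collection of distinct subsets of a vertex set; it is $k$-uniform if every member has exactly $k$ elements and linear if any two distinct members share at most one vertex. A matching is a collection of pairwise disjoint members; it is maximum if it has the largest possible size. $X_{\mathcal{M}}=\bigcup_{A\in\mathcal{M}}A$. For $i\in\{1,\ldots,k\}$, $D_i(\mathcal{F},\mathcal{M})=\{A\in\mathcal{F}: |A\cap X_{\mathcal{M}}|=i\}$, and for a vertex $x$, $d_i(x,\mathcal{M})=|\{A\in D_i(\mathcal{F},\mathcal{M}): x\in A\}|$. *)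

From mathcomp Require Import all_boot.
Set Implicit Arguments. Unset Strict Implicit. Unset Printing Implicit Defensive.

Section Families.
Variable T : finType.
Implicit Types (F M : {set {set T}}) (A B : {set T}) (x : T).

Definition uniform (k : nat) F : Prop := forall A, A \in F -> #|A| = k.

Definition linear F : Prop :=
  forall A B, A \in F -> B \in F -> A != B -> #|A :&: B| <= 1.

Definition matching F M : Prop :=
  M \subset F /\
  (forall A B, A \in M -> B \in M -> A != B -> [disjoint A & B]).

Definition maximum_matching F M : Prop :=
  matching F M /\ (forall M', matching F M' -> #|M'| <= #|M|).

Definition XM M : {set T} := cover M.

Definition D F M (i : nat) : {set {set T}} :=
  [set A in F | #|A :&: XM M| == i].

Definition deg F M (i : nat) x : nat := #|[set A in D F M i | x \in A]|.

End Families.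

From mathcomp Require Import all_boot zify.
Set Implicit Arguments. Unset Strict Implicit. Unset Printing Implicit Defensive.

(* Suppose some [A_y] in [D_1] contains [y]; it has [k - 1] vertices outside
   [X_M].  Every member of [D_1] through [x] that meets [A_y] does so outside
   [X_M], and by linearity two of them cannot meet [A_y] in the same vertex,
   since they already share [x].  As there are at least [k] of them, one, say
   [A_x], misses [A_y].  Both [A_x] and [A_y] meet [X_M] only inside [B], so
   replacing [B] by [A_x] and [A_y] gives a larger matching. *)

Section Matchings.
Variable T : finType.
Implicit Types (F M S : {set {set T}}) (A B C : {set T}) (x y : T).

Lemma mem_XM M C x : C \in M -> x \in C -> x \in XM M.
Proof. by move=> CM; apply/subsetP/bigcup_sup. Qed.

Lemma D_subset F M i : D F M i \subset F.
Proof. by apply/subsetP => A; rewrite inE => /andP []. Qed.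

Lemma D1_meet F M A x :
  A \in D F M 1 -> x \in A -> x \in XM M -> A :&: XM M = [set x].
Proof.
rewrite inE => /andP [_ /cards1P [z Ez]] xA xX.
have : x \in A :&: XM M by rewrite inE xA xX.
by rewrite Ez inE => /eqP ->.
Qed.

Lemma linear_subset S F : S \subset F -> linear F -> linear S.
Proof. by move=> /subsetP SF LF A B /SF AF /SF BF; apply: LF. Qed.

Lemma card_linear_star_le S C x :
  linear S -> (forall A, A \in S -> x \in A) ->
  (forall A, A \in S -> ~~ [disjoint A & C]) -> x \notin C ->
  #|S| <= #|C|.
Proof.
move=> LS Sx SC xC.
pose f A := odflt x [pick z in A :&: C].
have fAC A : A \in S -> f A \in A :&: C.
  move=> AS; rewrite /f; case: pickP => [z -> //|noz].
  by move: (SC A AS); rewrite -setI_eq0 => /set0Pn [z]; rewrite (noz z).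
have finj : {in S &, injective f}.
  move=> A A' AS A'S fAA'; apply/eqP/negPn/negP => neqAA'.
  move: (LS A A' AS A'S neqAA'); rewrite leqNgt => /negP; apply.
  have /setIP [fA fC] := fAC A AS.
  have /setIP [fA' _] := fAC A' A'S.
  have xfA : x != f A by apply: contraNneq xC => ->.
  suff /subset_leq_card : [set x; f A] \subset A :&: A' by rewrite cards2 xfA.
  by apply/subsetP => z; rewrite !inE => /orP [] /eqP ->; rewrite ?Sx ?fA // fAA'.
rewrite -(card_in_imset finj); apply: subset_leq_card.
by apply/subsetP => _ /imsetP [A AS ->]; have /setIP [] := fAC A AS.
Qed.

Lemma linear_star_disjoint S C x :
  linear S -> (forall A, A \in S -> x \in A) -> x \notin C -> #|C| < #|S| ->
  exists2 A, A \in S & [disjoint A & C].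
Proof.
move=> LS Sx xC ltCS; apply/exists_inP; apply: contraLR ltCS.
rewrite negb_exists_in => /forall_inP SC; rewrite -leqNgt.
exact: card_linear_star_le LS Sx SC xC.
Qed.

Lemma D1_disjoint_matching F M A B C x :
  matching F M -> B \in M -> C \in M -> C != B ->
  A :&: XM M = [set x] -> x \in B -> [disjoint A & C].
Proof.
move=> [_ disjM] BM CM CB AX xB; rewrite -setI_eq0; apply: contraT.
case/set0Pn => z /setIP [zA zC].
have : z \in A :&: XM M by rewrite inE zA (mem_XM CM zC).
rewrite AX inE => /eqP zx; rewrite zx in zC.
by rewrite (disjointFr (disjM C B CM BM CB) zC) in xB.
Qed.

Lemma disjoint_selfF A x : x \in A -> [disjoint A & A] = false.
Proof. by move=> xA; apply/negP => /disjointFr/(_ xA); rewrite xA. Qed.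

Lemma disjoint_outside A A' X x y :
  A :&: X = [set x] -> A' :&: X = [set y] -> x != y ->
  [disjoint A & A' :\: X] -> [disjoint A & A'].
Proof.
move=> AX A'X xy AA'X; rewrite -setI_eq0; apply: contraT.
case/set0Pn => z /setIP [zA zA'].
have zX : z \in X by apply: contraFT (disjointFr AA'X zA) => zX; rewrite !inE zA' zX.
have : z \in A :&: X by rewrite inE zA zX.
have : z \in A' :&: X by rewrite inE zA' zX.
by rewrite AX A'X !inE => /eqP -> /eqP yx; rewrite yx eqxx in xy.
Qed.

Lemma matching_exchange F M B A1 A2 x1 x2 :
  matching F M -> B \in M -> A1 \in F -> A2 \in F ->
  x1 \in A1 -> x2 \in A2 -> [disjoint A1 & A2] ->
  (forall C, C \in M -> C != B -> [disjoint A1 & C] /\ [disjoint A2 & C]) ->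
  exists2 M', matching F M' & #|M| < #|M'|.
Proof.
move=> [/subsetP MF disjM] BM A1F A2F xA1 xA2 A12 A_M.
have A_notin A z : z \in A -> (forall C, C \in M -> C != B -> [disjoint A & C]) ->
    A \notin M :\ B.
  move=> zA AM; rewrite !inE; apply/negP => /andP [AB AinM].
  by move: (AM A AinM AB); rewrite (disjoint_selfF zA).
have A1M := A_notin A1 x1 xA1 (fun C CM CB => (A_M C CM CB).1).
have A2M := A_notin A2 x2 xA2 (fun C CM CB => (A_M C CM CB).2).
have A12neq : A1 != A2.
  by apply: contraFneq (disjoint_selfF xA1) => eqA; rewrite {2}eqA.
exists (A1 |: (A2 |: M :\ B)); last first.
  by rewrite !cardsU1 (cardsD1 B M) BM in_setU1 (negbTE A12neq) A1M A2M.
have disj_rest P Q : P \in A1 |: (A2 |: M :\ B) -> Q \in M :\ B -> P != Q ->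
    [disjoint P & Q].
  move=> + /setD1P [QB QM]; rewrite !inE => /orP [/eqP ->|/orP [/eqP ->|/andP [_ PM]]].
  - by move=> _; case: (A_M Q QM QB).
  - by move=> _; case: (A_M Q QM QB).
  - exact: disjM.
split.
  apply/subsetP => P; rewrite !inE.
  by case/orP => [/eqP ->//|/orP [/eqP ->//|/andP [_ /MF]]].
move=> P Q PM' QM' PQ.
case QMB: (Q \in M :\ B); first exact: disj_rest.
case PMB: (P \in M :\ B); first by rewrite disjoint_sym disj_rest // eq_sym.
move: PM' QM' PQ; rewrite !in_setU1 PMB QMB !orbF.
by case/orP => /eqP -> /orP [] /eqP ->; rewrite ?eqxx // disjoint_sym.
Qed.

End Matchings.

Theorem lemma2 (T : finType) (k : nat) (F M : {set {set T}}) (B : {set T}) :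
  2 <= k ->
  uniform k F -> linear F ->
  maximum_matching F M ->
  B \in M ->
  forall x, x \in B -> k <= deg F M 1 x ->
  forall y, y \in B -> y != x -> deg F M 1 y = 0.
Proof.
move=> k2 U L [Mm Mmax] BM x xB dx y yB yx.
have xX := mem_XM BM xB; have yX := mem_XM BM yB.
apply/eqP; rewrite cards_eq0; apply: contraT => /set0Pn [Ay].
rewrite inE => /andP [AyD yAy].
have AyF := subsetP (D_subset F M 1) Ay AyD.
have AyX := D1_meet AyD yAy yX.
set S := [set A in D F M 1 | x \in A].
have [Ax] : exists2 Ax, Ax \in S & [disjoint Ax & Ay :\: XM M].
  apply: (linear_star_disjoint (x := x)).
  - apply: linear_subset L; apply: subset_trans (D_subset F M 1).
    by apply/subsetP => A; rewrite inE => /andP [].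
  - by move=> A; rewrite inE => /andP [].
  - by rewrite inE xX.
  - by rewrite cardsD AyX cards1 (U _ AyF); move: dx; rewrite /deg -/S; lia.
rewrite inE => /andP [AxD xAx] AxC.
have AxF := subsetP (D_subset F M 1) Ax AxD.
have AxX := D1_meet AxD xAx xX.
have xy : x != y by rewrite eq_sym.
have AxAy := disjoint_outside AxX AyX xy AxC.
have [M' M'm ltM] := matching_exchange Mm BM AxF AyF xAx yAy AxAy
  (fun C CM CB => conj (D1_disjoint_matching Mm BM CM CB AxX xB)
                       (D1_disjoint_matching Mm BM CM CB AyX yB)).
by move: (Mmax _ M'm); rewrite leqNgt ltM.
Qed.
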